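(* Let $(\Lambda,d)$ be a finitely aligned $k$-graph and give $X_\Lambda$ the topology generated by the subbasis $\{D_G,X_\Lambda\setminus D_G:G\in S_\Lambda\}$. Then $D_F$ is compact for each $F\in S_\Lambda$.
   Context: A $k$-graph $(\Lambda,d)$ is a countable small category $\Lambda$ (objects identified with identity morphisms) with a functor $d:\Lambda\to\mathbb N^k$ satisfying unique factorization: whenever $d(\lambda)=m+n$ there are unique $\mu,\nu$ with $d(\mu)=m$, $d(\nu)=n$, $\lambda=\mu\nu$. $r,s$ range/source. $\Lambda^{\min}(\lambda,\mu)=\{(\alpha,\beta):\lambda\alpha=\mu\beta,\ d(\lambda\alpha)=d(\lambda)\vee d(\mu)\}$; finitely aligned means all are finite. $S_\Lambda$ is the set of finite $F\subseteq\{(\lambda,\mu):s(\lambda)=s(\mu)\}$ such that distinct $(\lambda,\mu),(\nu,\omega)\in F$ satisfy $\Lambda^{\min}(\lambda,\nu)=\Lambda^{\min}(\mu,\omega)=\emptyset$. $\Omega_{k,m}$ ($m\in(\mathbb N\cup\{\infty\})^k$): objects $\{p\in\mathbb N^k:p\le m\}$, morphisms $(p,q)$ with $p\le q\le m$, $r(p,q)=p$, $s(p,q)=q$, $d(p,q)=q-p$. $X_\Lambda$ = all degree-preserving functors $x:\Omega_{k,m}\to\Lambda$; $d(x)=m$. $D_F=\{x\in X_\Lambda:\exists(\lambda,\mu)\in F,\ d(\mu)\le d(x),\ x(0,d(\mu))=\mu\}$. *)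

From Stdlib Require Import List.
From mathcomp Require Import all_boot.
Set Implicit Arguments. Unset Strict Implicit. Unset Printing Implicit Defensive.

Definition NN (k : nat) := 'I_k -> nat.
Definition nle k (p q : NN k) : Prop := forall i, p i <= q i.
Definition nadd k (p q : NN k) : NN k := fun i => p i + q i.
Definition nsub k (q p : NN k) : NN k := fun i => q i - p i.
Definition njoin k (p q : NN k) : NN k := fun i => maxn (p i) (q i).
Definition nzero k : NN k := fun _ => 0.
(* (N u {oo})^k : None = infinity *)
Definition NNinf (k : nat) := 'I_k -> option nat.
Definition nleinf k (q : NN k) (m : NNinf k) : Prop :=
  forall i, match m i with None => true | Some n => q i <= n end.

(* A k-graph: countable small category (objects and morphisms countable),
   composition [comp l m] meaningful when [s l = r m], degree functor d,
   unique factorisation. *)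
Record kgraph (k : nat) := KGraph {
  Obj : countType;
  Mor : countType;
  r : Mor -> Obj;
  s : Mor -> Obj;
  ident : Obj -> Mor;
  comp : Mor -> Mor -> Mor;
  deg : Mor -> NN k;
  r_ident : forall v, r (ident v) = v;
  s_ident : forall v, s (ident v) = v;
  r_comp : forall l m, s l = r m -> r (comp l m) = r l;
  s_comp : forall l m, s l = r m -> s (comp l m) = s m;
  comp_identl : forall l, comp (ident (r l)) l = l;
  comp_identr : forall l, comp l (ident (s l)) = l;
  comp_assoc : forall l m n, s l = r m -> s m = r n ->
      comp l (comp m n) = comp (comp l m) n;
  deg_ident : forall v, deg (ident v) = @nzero k;
  deg_comp : forall l m, s l = r m -> deg (comp l m) = nadd (deg l) (deg m);
  unique_fact : forall l (m n : NN k), deg l = nadd m n ->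
      exists! mn : Mor * Mor, s mn.1 = r mn.2 /\ deg mn.1 = m /\
                              deg mn.2 = n /\ l = comp mn.1 mn.2
}.

Section KG.
Variables (k : nat) (L : kgraph k).
Local Notation Mor := (Mor L).
Local Notation d := (@deg k L).

Definition in_min (la mu : Mor) (ab : Mor * Mor) : Prop :=
  s la = r ab.1 /\ s mu = r ab.2 /\
  comp la ab.1 = comp mu ab.2 /\
  d (comp la ab.1) = njoin (d la) (d mu).

Definition finitely_aligned : Prop :=
  forall la mu, exists l : seq (Mor * Mor), forall ab, in_min la mu ab -> ab \in l.

Definition min_empty (la mu : Mor) : Prop := forall ab, ~ in_min la mu ab.

Definition in_S (F : seq (Mor * Mor)) : Prop :=
  (forall lm, lm \in F -> s lm.1 = s lm.2) /\
  (forall lm no, lm \in F -> no \in F -> lm <> no ->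
       min_empty lm.1 no.1 /\ min_empty lm.2 no.2).

(* Path space X_Lambda: degree-preserving functors Omega_{k,m} -> Lambda.
   The morphism (p,q) of Omega_{k,m} (p <= q <= m) is sent to [path p q _ _]. *)
Record XPath := MkXPath {
  xdeg : NNinf k;
  path : forall p q : NN k, nle p q -> nleinf q xdeg -> Mor;
  path_irr : forall p q (H H' : nle p q) (Hm Hm' : nleinf q xdeg),
      path H Hm = path H' Hm';
  path_ident : forall p (H : nle p p) (Hm : nleinf p xdeg),
      exists v, path H Hm = ident v;
  path_deg : forall p q (H : nle p q) (Hm : nleinf q xdeg),
      d (path H Hm) = nsub q p;
  path_comp : forall p q t (Hpq : nle p q) (Hqt : nle q t) (Hpt : nle p t)
      (Hqm : nleinf q xdeg) (Htm : nleinf t xdeg),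
      s (path Hpq Hqm) = r (path Hqt Htm) /\
      path Hpt Htm = comp (path Hpq Hqm) (path Hqt Htm)
}.

Lemma nle0 (p : NN k) : nle (@nzero k) p.
Proof. by move=> i. Qed.

Definition DF (F : seq (Mor * Mor)) (x : XPath) : Prop :=
  exists2 lm, lm \in F &
    exists H : nleinf (d lm.2) (xdeg x), path (nle0 (d lm.2)) H = lm.2.

Definition subbasic (V : XPath -> Prop) : Prop :=
  exists G, in_S G /\
    ((forall x, V x <-> DF G x) \/ (forall x, V x <-> ~ DF G x)).

End KG.

(* Topology generated by a subbasis B: unions of finite intersections. *)
Definition gen_open (X : Type) (B : (X -> Prop) -> Prop) (U : X -> Prop) : Prop :=
  forall x, U x -> exists l : list (X -> Prop),
    (forall V, In V l -> B V) /\ (forall V, In V l -> V x) /\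
    (forall y, (forall V, In V l -> V y) -> U y).

Definition compact_in (X : Type) (isopen : (X -> Prop) -> Prop) (A : X -> Prop) : Prop :=
  forall (I : Type) (U : I -> X -> Prop), (forall i, isopen (U i)) ->
    (forall x, A x -> exists i, U i x) ->
    exists l : list I, forall x, A x -> exists i, In i l /\ U i x.

(* Every sequence in D_F has a cluster point in D_F; since the subbasis is
   countable, this gives compactness.  To find the cluster point, extract from
   the sequence a Cantor-space cluster point of the indicator sequences of the
   countably many cylinder sets Z(mu).  The set of mu it selects is closed
   under prefixes and, by finite alignment, under minimal common extensions;
   such a set is the set of initial segments of a unique path x, and x is the
   cluster point. *)
From Stdlib Require Import List.
From mathcomp Require Import all_boot.
From Stdlib Require Import Classical ClassicalEpsilon FunctionalExtensionality.
From mathcomp Require Import zify.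
Set Implicit Arguments. Unset Strict Implicit. Unset Printing Implicit Defensive.

Section Degrees.
Variable k : nat.

Lemma nsub0 (p : NN k) : nsub p (@nzero k) = p.
Proof. by apply: functional_extensionality => i; rewrite /nsub subn0. Qed.

Lemma nsubnn (p : NN k) : nsub p p = @nzero k.
Proof. by apply: functional_extensionality => i; rewrite /nsub subnn. Qed.

Lemma njoinnn (p : NN k) : njoin p p = p.
Proof. by apply: functional_extensionality => i; rewrite /njoin maxnn. Qed.

Lemma nsubKC (p q : NN k) : nle p q -> nadd p (nsub q p) = q.
Proof. by move=> pq; apply: functional_extensionality => i; rewrite /nadd /nsub subnKC. Qed.

Lemma naddsub_trans (p q t : NN k) : nle p q -> nle q t ->
  nadd (nsub q p) (nsub t q) = nsub t p.
Proof.
move=> pq qt; apply: functional_extensionality => i; rewrite /nadd /nsub.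
by have := pq i; have := qt i; lia.
Qed.

Lemma nleinf_trans (p q : NN k) (m : NNinf k) : nle p q -> nleinf q m -> nleinf p m.
Proof. by move=> pq qm i; have := qm i; case: (m i) => // n; exact: leq_trans (pq i). Qed.

End Degrees.

(* The [: bool] casts make the right-hand sides syntactically the body of [nleinf]. *)
Lemma downclosed_nat (P : nat -> Prop) : P 0 -> (forall m n, m <= n -> P n -> P m) ->
  exists o : option nat,
    forall n, P n <-> (match o with None => true | Some b => n <= b end : bool).
Proof.
move=> P0 Pdown; have [Pall|/not_all_ex_not [n nPn]] := classic (forall n, P n).
  by exists None.
elim: n nPn => [/(_ P0) //|n IH nPn].
have [Pn|/IH //] := classic (P n).
exists (Some n) => m; split => [Pm|mn]; last exact: Pdown mn Pn.
by rewrite leqNgt; apply/negP => nm; apply: nPn; exact: Pdown nm Pm.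
Qed.

Section KGraph.
Variables (k : nat) (L : kgraph k).
Local Notation d := (@deg k L).

Lemma deg0_ident (l : Mor L) : d l = @nzero k -> l = ident (r l).
Proof.
move=> dl; have dl2 : d l = nadd (@nzero k) (@nzero k).
  by rewrite dl; apply: functional_extensionality.
have [[a b] [_ uniq_ab]] := unique_fact dl2.
have E1 : (ident (r l), l) = (a, b).
  apply: esym; apply: uniq_ab; rewrite /= s_ident deg_ident dl comp_identl.
  by split.
have E2 : (l, ident (s l)) = (a, b).
  apply: esym; apply: uniq_ab; rewrite /= r_ident deg_ident dl comp_identr.
  by split.
by rewrite -E2 in E1; case: E1.
Qed.

Lemma comp_deg_ident (x y : Mor L) : s x = r y -> d (comp x y) = d x -> y = ident (s x).
Proof.
move=> sxy dxy; rewrite sxy; apply: deg0_ident; apply: functional_extensionality => i.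
by have := congr1 (fun f => f i) dxy; rewrite deg_comp // /nadd /nzero /=; lia.
Qed.

Lemma comp_factor_inj (a b a' b' : Mor L) : s a = r b -> s a' = r b' ->
  d a = d a' -> d b = d b' -> comp a b = comp a' b' -> a = a' /\ b = b'.
Proof.
move=> sab sab' da db E.
have [[u v] [_ uniq_uv]] := unique_fact (deg_comp sab).
have E1 : (u, v) = (a, b) by apply: uniq_uv.
have E2 : (u, v) = (a', b') by apply: uniq_uv; rewrite -da -db -E.
by rewrite E1 in E2; case: E2.
Qed.

Definition cylinder (mu : Mor L) (y : XPath L) : Prop :=
  exists H : nleinf (d mu) (xdeg y), path (nle0 (d mu)) H = mu.

Lemma cylinder_path0 (y : XPath L) q (H : nleinf q (xdeg y)) : cylinder (path (nle0 q) H) y.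
Proof. by rewrite /cylinder path_deg nsub0; exists H. Qed.

Lemma cylinder_prefix (y : XPath L) mu nu : s mu = r nu ->
  cylinder (comp mu nu) y -> cylinder mu y.
Proof.
move=> smu [H E]; have dmunu := deg_comp smu.
have le_mu : nle (d mu) (d (comp mu nu)) by move=> i; rewrite dmunu /nadd leq_addr.
have H' := nleinf_trans le_mu H.
have [s_eq E'] := path_comp (nle0 (d mu)) le_mu (nle0 _) H' H.
exists H'.
have d1 : d (path (nle0 (d mu)) H') = d mu by rewrite path_deg nsub0.
have d2 : d (path le_mu H) = d nu.
  by rewrite path_deg dmunu; apply: functional_extensionality => i; rewrite /nsub /nadd addKn.
by have [] := comp_factor_inj s_eq smu d1 d2 (etrans (esym E') E).
Qed.

Lemma cylinder_join (y : XPath L) mu nu : cylinder mu y -> cylinder nu y ->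
  exists2 ab, in_min mu nu ab & cylinder (comp mu ab.1) y.
Proof.
move=> [H1 E1] [H2 E2]; set q := njoin (d mu) (d nu).
have Hq : nleinf q (xdeg y).
  move=> i; have := H1 i; have := H2 i; rewrite /q /njoin.
  by case: (xdeg y i) => // n; rewrite geq_max => -> ->.
have le1 : nle (d mu) q by move=> i; rewrite /q /njoin leq_maxl.
have le2 : nle (d nu) q by move=> i; rewrite /q /njoin leq_maxr.
have [s1 P1] := path_comp (nle0 (d mu)) le1 (nle0 q) H1 Hq.
have [s2 P2] := path_comp (nle0 (d nu)) le2 (nle0 q) H2 Hq.
rewrite E1 in s1 P1; rewrite E2 in s2 P2.
exists (path le1 Hq, path le2 Hq); last by rewrite /= -P1; apply: cylinder_path0.
by do 3!split => //=; rewrite -?P1 -?P2 // path_deg nsub0.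
Qed.

Lemma DF_cylinder_congr (G : seq (Mor L * Mor L)) (y y' : XPath L) :
  (forall lm, lm \in G -> (cylinder lm.2 y <-> cylinder lm.2 y')) -> (DF G y <-> DF G y').
Proof. by move=> Gyy'; split=> -[lm Glm Hlm]; exists lm => //; apply/(Gyy' _ Glm). Qed.

End KGraph.

Section PathOfSet.
Variables (k : nat) (L : kgraph k) (A : Mor L -> Prop).
Local Notation d := (@deg k L).
Hypothesis A_prefix : forall mu nu, s mu = r nu -> A (comp mu nu) -> A mu.
Hypothesis A_join : forall mu nu, A mu -> A nu ->
  exists2 ab, in_min mu nu ab & A (comp mu ab.1).
Variables (mu0 : Mor L) (A_mu0 : A mu0).

Lemma A_deg_inj mu nu : A mu -> A nu -> d mu = d nu -> mu = nu.
Proof.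
move=> Amu Anu dE; have [[a b] [/= sa [sb [Eab dab]]] _] := A_join Amu Anu.
have da : d (comp mu a) = d mu by rewrite dab -dE njoinnn.
have db : d (comp nu b) = d nu by rewrite -Eab da dE.
rewrite -(comp_identr mu) -(comp_identr nu).
by rewrite -(comp_deg_ident sa da) -(comp_deg_ident sb db).
Qed.

Lemma A_ub mu nu : A mu -> A nu ->
  exists2 rho, A rho & nle (d mu) (d rho) /\ nle (d nu) (d rho).
Proof.
move=> Amu Anu; have [[a b] [_ [_ [_ dab]]] Aa] := A_join Amu Anu.
by exists (comp mu a) => //; rewrite dab; split => i; [exact: leq_maxl | exact: leq_maxr].
Qed.

Lemma sup_deg_spec i : exists o : option nat, forall n, (exists2 mu, A mu & n <= d mu i) <->
  (match o with None => true | Some b => n <= b end : bool).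
Proof.
apply: downclosed_nat; first by exists mu0.
by move=> m n mn [mu Amu nmu]; exists mu => //; exact: leq_trans nmu.
Qed.

Definition sup_deg : NNinf k :=
  fun i => proj1_sig (constructive_indefinite_description _ (sup_deg_spec i)).

Lemma sup_degP i n : (exists2 mu, A mu & n <= d mu i) <->
  (match sup_deg i with None => true | Some b => n <= b end : bool).
Proof. exact: proj2_sig (constructive_indefinite_description _ (sup_deg_spec i)) n. Qed.

Lemma nleinf_sup_deg q : nleinf q sup_deg <-> forall i, exists2 mu, A mu & q i <= d mu i.
Proof. by split => H i; apply/sup_degP; exact: H i. Qed.

Lemma A_deg_le_sup mu : A mu -> nleinf (d mu) sup_deg.
Proof. by move=> Amu; apply/nleinf_sup_deg => i; exists mu. Qed.

Lemma A_above q : nleinf q sup_deg -> exists2 rho, A rho & nle q (d rho).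
Proof.
move/nleinf_sup_deg => qle.
suff [rho Arho le_rho] : exists2 rho, A rho & forall i, i \in enum 'I_k -> q i <= d rho i.
  by exists rho => // i; apply: le_rho; rewrite mem_enum.
elim: (enum 'I_k) => [|i l [rho Arho le_rho]]; first by exists mu0.
have [mu Amu qmu] := qle i.
have [rho' Arho' [rho_rho' mu_rho']] := A_ub Arho Amu.
exists rho' => // j; rewrite inE => /orP[/eqP->|jl].
  exact: leq_trans qmu (mu_rho' i).
exact: leq_trans (le_rho j jl) (rho_rho' j).
Qed.

Lemma A_of_deg q : nleinf q sup_deg -> exists2 mu, A mu & d mu = q.
Proof.
move=> /A_above [rho Arho q_rho].
have [[a b] [[/= sab [da [_ Eab]]] _]] := unique_fact (esym (nsubKC q_rho)).
by exists a => //; apply: (A_prefix sab); rewrite -Eab.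
Qed.

Definition seg q := epsilon (inhabits mu0) (fun mu => A mu /\ d mu = q).

Lemma seg_spec q : nleinf q sup_deg -> A (seg q) /\ d (seg q) = q.
Proof.
move=> /A_of_deg [mu Amu dmu].
by apply: (epsilon_spec _ (fun mu => A mu /\ d mu = q)); exists mu.
Qed.

Definition seg_step p q := epsilon (inhabits mu0)
  (fun b => [/\ s (seg p) = r b, d b = nsub q p & seg q = comp (seg p) b]).

Lemma seg_step_spec p q : nle p q -> nleinf q sup_deg ->
  [/\ s (seg p) = r (seg_step p q), d (seg_step p q) = nsub q p
    & seg q = comp (seg p) (seg_step p q)].
Proof.
move=> pq q_sup; apply: (epsilon_spec _
  (fun b => [/\ s (seg p) = r b, d b = nsub q p & seg q = comp (seg p) b])).
have [Aq dq] := seg_spec q_sup.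
have [Ap dp] := seg_spec (nleinf_trans pq q_sup).
have [[a b] [[/= sab [da [db Eab]]] _]] := unique_fact (etrans dq (esym (nsubKC pq))).
have ap : a = seg p.
  by apply: A_deg_inj; [apply: (A_prefix sab); rewrite -Eab | | rewrite da dp].
by exists b; rewrite -ap.
Qed.

Lemma seg_step0 q : nleinf q sup_deg -> seg_step (@nzero k) q = seg q.
Proof.
move=> q_sup; have [s0 _ E] := seg_step_spec (nle0 q) q_sup.
have [_ d0] := seg_spec (nleinf_trans (nle0 q) q_sup).
have id0 : seg (@nzero k) = ident (r (seg_step (@nzero k) q)).
  by rewrite -s0 {2}(deg0_ident d0) s_ident; exact: deg0_ident.
by rewrite E id0 comp_identl.
Qed.

Definition seg_path (p q : NN k) (_ : nle p q) (_ : nleinf q sup_deg) := seg_step p q.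

Lemma seg_path_irr p q (H H' : nle p q) (Hm Hm' : nleinf q sup_deg) :
  seg_path H Hm = seg_path H' Hm'.
Proof. by []. Qed.

Lemma seg_path_deg p q (H : nle p q) (Hm : nleinf q sup_deg) :
  d (seg_path H Hm) = nsub q p.
Proof. by have [] := seg_step_spec H Hm. Qed.

Lemma seg_path_ident p (H : nle p p) (Hm : nleinf p sup_deg) :
  exists v, seg_path H Hm = ident v.
Proof. by exists (r (seg_path H Hm)); apply: deg0_ident; rewrite seg_path_deg nsubnn. Qed.

Lemma seg_path_comp p q t (Hpq : nle p q) (Hqt : nle q t) (Hpt : nle p t)
    (Hqm : nleinf q sup_deg) (Htm : nleinf t sup_deg) :
  s (seg_path Hpq Hqm) = r (seg_path Hqt Htm) /\
  seg_path Hpt Htm = comp (seg_path Hpq Hqm) (seg_path Hqt Htm).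
Proof.
rewrite /seg_path.
have [s1 d1 E1] := seg_step_spec Hpq Hqm.
have [s2 d2 E2] := seg_step_spec Hqt Htm.
have [s3 d3 E3] := seg_step_spec Hpt Htm.
have s12 : s (seg_step p q) = r (seg_step q t) by rewrite -s2 E1 s_comp.
split => //.
have E : comp (seg p) (seg_step p t) = comp (seg p) (comp (seg_step p q) (seg_step q t)).
  by rewrite -E3 E2 E1 comp_assoc.
have [] := comp_factor_inj s3 _ erefl _ E => //; first by rewrite r_comp.
by rewrite deg_comp // d1 d2 d3 naddsub_trans.
Qed.

Definition path_of : XPath L :=
  @MkXPath k L sup_deg seg_path seg_path_irr seg_path_ident seg_path_deg seg_path_comp.

Lemma cylinder_path_of mu : cylinder mu path_of <-> A mu.
Proof.
split => [[H E]|Amu].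
  rewrite /= /seg_path seg_step0 // in E.
  by have [] := seg_spec H; rewrite E.
exists (A_deg_le_sup Amu); rewrite /= /seg_path seg_step0; last exact: A_deg_le_sup.
by have [Aseg dseg] := seg_spec (A_deg_le_sup Amu); apply: A_deg_inj.
Qed.

End PathOfSet.

Section ClusterPattern.
Variables (X : Type) (Q : nat -> X -> Prop) (xs : nat -> X).

Definition realises (c : seq bool) (y : X) :=
  forall j, j < size c -> (Q j y <-> nth false c j).

Definition frequent (c : seq bool) := forall N, exists2 n, N <= n & realises c (xs n).

Lemma frequent_rcons c : frequent c -> frequent (rcons c true) \/ frequent (rcons c false).
Proof.
move=> fc; apply: NNPP => /not_or_and [/not_all_ex_not [N1 H1] /not_all_ex_not [N2 H2]].
have [n Nn cn] := fc (maxn N1 N2).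
have ext (b : bool) : (Q (size c) (xs n) <-> b) -> realises (rcons c b) (xs n).
  move=> Qb j; rewrite size_rcons ltnS leq_eqVlt => /orP[/eqP->|jc].
    by rewrite nth_rcons ltnn eqxx.
  by rewrite nth_rcons jc; apply: cn.
have [Qn|nQn] := classic (Q (size c) (xs n)).
  by apply: H1; exists n; [exact: leq_trans (leq_maxl _ _) Nn | apply: ext].
by apply: H2; exists n; [exact: leq_trans (leq_maxr _ _) Nn | apply: ext; split => // /nQn].
Qed.

Fixpoint branch (J : nat) : seq bool :=
  if J is J'.+1 then
    rcons (branch J')
      (if excluded_middle_informative (frequent (rcons (branch J') true)) then true else false)
  else [::].

Lemma size_branch J : size (branch J) = J.
Proof. by elim: J => //= J IH; rewrite size_rcons IH. Qed.

Lemma frequent_branch J : frequent (branch J).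
Proof.
elim: J => [N|J IH /=]; first by exists N => // j.
by case: excluded_middle_informative => // nf; case: (frequent_rcons IH).
Qed.

Lemma nth_branch j J : j < J -> nth false (branch J) j = nth false (branch j.+1) j.
Proof.
elim: J => // J IH; rewrite ltnS leq_eqVlt => /orP[/eqP-> //|jJ].
by rewrite /= nth_rcons size_branch jJ IH.
Qed.

Lemma exists_cluster_pattern : exists chi : nat -> bool,
  forall J N, exists2 n, N <= n & forall j, j < J -> (Q j (xs n) <-> chi j).
Proof.
exists (fun j => nth false (branch j.+1) j) => J N.
have [n Nn Hn] := frequent_branch J N; exists n => // j jJ.
by rewrite -(nth_branch jJ); apply: Hn; rewrite size_branch.
Qed.

End ClusterPattern.

Section CountableBasis.
Variables (X : Type) (C : countType) (basic : C -> X -> Prop).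
Variable isopen : (X -> Prop) -> Prop.
Hypothesis open_nbhd : forall U x, isopen U -> U x ->
  exists2 c, basic c x & forall y, basic c y -> U y.

Lemma finite_choice_basic (I : Type) (U : I -> X -> Prop) (cs : seq C) :
  exists l : list I, forall c, c \in cs -> (exists i, forall y, basic c y -> U i y) ->
    exists i, In i l /\ forall y, basic c y -> U i y.
Proof.
elim: cs => [|c cs [l Hl]]; first by exists nil.
have [[i Hi]|no_i] := classic (exists i, forall y, basic c y -> U i y).
  exists (i :: l) => c'; rewrite inE => /orP[/eqP-> _|c'cs /(Hl _ c'cs) [j [jl Hj]]].
    by exists i; split => //; left.
  by exists j; split => //; right.
by exists l => c'; rewrite inE => /orP[/eqP->|/Hl].
Qed.

Variable K : X -> Prop.
Hypothesis K_cluster : forall xs : nat -> X, (forall n, K (xs n)) ->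
  exists2 x, K x & forall c, basic c x -> forall N, exists2 n, N <= n & basic c (xs n).

Lemma compact_of_cluster : compact_in isopen K.
Proof.
move=> I U U_open K_cover; apply: NNPP => no_subcover.
pose useful c := exists i, forall y, basic c y -> U i y.
have avoid n : exists y, K y /\ forall c, pickle c <= n -> useful c -> ~ basic c y.
  apply: NNPP => all_hit; apply: no_subcover.
  have [l Hl] := finite_choice_basic U (pmap unpickle (iota 0 n.+1)).
  exists l => y Ky.
  have [c [cn c_useful cy]] : exists c, [/\ pickle c <= n, useful c & basic c y].
    apply: NNPP => no_c; apply: all_hit; exists y; split => // c cn cu cy.
    by apply: no_c; exists c.
  have c_in : c \in pmap unpickle (iota 0 n.+1).
    by rewrite mem_pmap -pickleK map_f // mem_iota.
  by have [i [il Hi]] := Hl c c_in c_useful; exists i; split => //; apply: Hi.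
have [xs xsP] := choice _ avoid.
have [x Kx x_cluster] := K_cluster (fun n => (xsP n).1).
have [i Uix] := K_cover x Kx.
have [c cx cU] := open_nbhd (U_open i) Uix.
have [n cn cxn] := x_cluster c cx (pickle c).
by apply: (xsP n).2 cn _ cxn; exists i.
Qed.

End CountableBasis.

Section PathSpaceTopology.
Variables (k : nat) (L : kgraph k).

Definition basic_open (c : seq (seq (Mor L * Mor L) * bool)) (y : XPath L) :=
  forall Gb, Gb \in c -> (DF Gb.1 y <-> Gb.2).

Lemma basic_cat c1 c2 y : basic_open (c1 ++ c2) y <-> basic_open c1 y /\ basic_open c2 y.
Proof.
split => [H|[H1 H2] Gb]; last by rewrite mem_cat => /orP[/H1|/H2].
by split => Gb HGb; apply: H; rewrite mem_cat HGb ?orbT.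
Qed.

Lemma subbasic_nbhd V x : subbasic V -> V x ->
  exists2 c, basic_open c x & forall y, basic_open c y -> V y.
Proof.
move=> [G [_ [VG|VG]]] Vx.
  exists [:: (G, true)] => [Gb|y Hy].
    by rewrite inE => /eqP-> /=; split => // _; apply/VG.
  by apply/VG; apply/(Hy (G, true)); rewrite ?inE.
exists [:: (G, false)] => [Gb|y Hy].
  by rewrite inE => /eqP-> /=; split => // /((VG x).1 Vx).
by apply/VG => /(Hy (G, false)); rewrite inE eqxx => /(_ isT).
Qed.

Lemma gen_open_nbhd U x : gen_open (@subbasic k L) U -> U x ->
  exists2 c, basic_open c x & forall y, basic_open c y -> U y.
Proof.
move=> HU /HU [l [l_sub [l_x l_U]]].
suff [c cx cl] :
    exists2 c, basic_open c x & forall y, basic_open c y -> forall V, In V l -> V y.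
  by exists c => // y /cl; exact: l_U.
elim: l l_sub l_x {l_U} => [|V l IH] l_sub l_x; first by exists [::] => // y _ V [].
have [c1 c1x c1V] := subbasic_nbhd (l_sub V (or_introl erefl)) (l_x V (or_introl erefl)).
have [c2 c2x c2l] :=
  IH (fun W lW => l_sub W (or_intror lW)) (fun W lW => l_x W (or_intror lW)).
exists (c1 ++ c2); first exact/basic_cat.
by move=> y /basic_cat [/c1V Vy /c2l ly] W [<-|/ly].
Qed.

Definition cylinder_of_index (j : nat) (y : XPath L) : Prop :=
  if (unpickle j : option (Mor L)) is Some mu then cylinder mu y else False.

Section Limit.
Variables (xs : nat -> XPath L) (chi : nat -> bool).
Hypothesis chiP : forall J N,
  exists2 n, N <= n & forall j, j < J -> (cylinder_of_index j (xs n) <-> chi j).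

Definition limit_set (mu : Mor L) : bool := chi (pickle mu).

Lemma limit_agree (S : seq (Mor L)) N :
  exists2 n, N <= n & forall mu, mu \in S -> (cylinder mu (xs n) <-> limit_set mu).
Proof.
have [n Nn Hn] := chiP (\max_(mu <- S) (pickle mu).+1) N.
exists n => // mu muS.
have lt_mu : pickle mu < \max_(mu <- S) (pickle mu).+1 by exact: leq_bigmax_seq.
by have := Hn _ lt_mu; rewrite /cylinder_of_index pickleK.
Qed.

Lemma limit_prefix mu nu : s mu = r nu -> limit_set (comp mu nu) -> limit_set mu.
Proof.
move=> smu Amunu; have [n _ Hn] := limit_agree [:: comp mu nu; mu] 0.
apply/(Hn mu); first by rewrite !inE eqxx orbT.
by apply: (cylinder_prefix smu); apply/(Hn (comp mu nu)); rewrite ?inE ?eqxx.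
Qed.

Lemma limit_join : finitely_aligned L -> forall mu nu, limit_set mu -> limit_set nu ->
  exists2 ab, in_min mu nu ab & limit_set (comp mu ab.1).
Proof.
move=> Hfa mu nu Amu Anu; have [l lP] := Hfa mu nu.
have [n _ Hn] := limit_agree ([:: mu; nu] ++ [seq comp mu ab.1 | ab <- l]) 0.
have Zmu : cylinder mu (xs n) by apply/(Hn mu); rewrite ?inE ?eqxx.
have Znu : cylinder nu (xs n) by apply/(Hn nu); rewrite ?inE ?eqxx ?orbT.
have [ab ab_min Zab] := cylinder_join Zmu Znu.
have ab_in : comp mu ab.1 \in [:: mu; nu] ++ [seq comp mu ab.1 | ab <- l].
  by rewrite mem_cat (map_f (fun ab => comp mu ab.1) (lP _ ab_min)) orbT.
by exists ab => //; apply/(Hn _ ab_in).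
Qed.

End Limit.

Lemma DF_cluster (F : seq (Mor L * Mor L)) : finitely_aligned L ->
  forall xs : nat -> XPath L, (forall n, DF F (xs n)) ->
  exists2 x, DF F x &
    forall c, basic_open c x -> forall N, exists2 n, N <= n & basic_open c (xs n).
Proof.
move=> Hfa xs xsF; have [chi chiP] := exists_cluster_pattern cylinder_of_index xs.
have [lm0 F_lm0 A_lm0] : exists2 lm, lm \in F & limit_set chi lm.2.
  have [n _ Hn] := limit_agree chiP [seq lm.2 | lm <- F] 0.
  have [lm Flm Zlm] := xsF n.
  by exists lm => //; apply/(Hn _ (map_f _ Flm)).
pose x := path_of (limit_prefix chiP) (limit_join chiP Hfa) A_lm0.
exists x; first by exists lm0 => //; apply/cylinder_path_of.
move=> c cx N.
have [n Nn Hn] := limit_agree chiP (flatten [seq [seq lm.2 | lm <- Gb.1] | Gb <- c]) N.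
exists n => // Gb cGb; rewrite -(cx _ cGb); apply: DF_cylinder_congr => lm Glm.
rewrite cylinder_path_of; apply: Hn; apply/flattenP.
by exists [seq lm.2 | lm <- Gb.1]; apply: map_f.
Qed.

End PathSpaceTopology.

Theorem corollary5p8 (k : nat) (L : kgraph k) (Hfa : finitely_aligned L)
  (F : seq (Mor L * Mor L)) (HF : in_S F) :
  compact_in (gen_open (@subbasic k L)) (DF F).
Proof.
exact: (compact_of_cluster (@gen_open_nbhd k L) (DF_cluster (F := F) Hfa)).
Qed.
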